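(* Let $\mathbb{F}_q$ be a finite field and, for $\alpha\in\mathbb{F}_q^*$, let $N_{\mathbb{A}_n}(\alpha)$ be the number of $\mathbb{F}_q$-points of $X_n(\alpha)$. If $n$ is even, then $N_{\mathbb{A}_n}(\alpha)=\frac{q^{n+2}-1}{q^2-1}$ (independently of $\alpha$). If $n$ is odd and $\alpha\neq(-1)^{(n+1)/2}$, then $N_{\mathbb{A}_n}(\alpha)=\frac{(q^{(n+1)/2}-1)(q^{(n+3)/2}-1)}{q^2-1}$. If $n$ is odd, then $N_{\mathbb{A}_n}((-1)^{(n+1)/2})=\frac{(q^{(n+1)/2}-1)(q^{(n+3)/2}-1)}{q^2-1}+q^{(n+1)/2}$.
   Context: For $\alpha$ invertible in a field $\mathbb{K}$ and $n\ge1$, $X_n(\alpha)$ is the affine variety in variables $x_1,\dots,x_n,x'_1,\dots,x'_n$ defined by $x_1x'_1=1+\alpha x_2$, $x_ix'_i=1+x_{i-1}x_{i+1}$ for $2\le i\le n-1$, $x_nx'_n=1+x_{n-1}$ (for $n=1$: $x_1x'_1=1+\alpha$). By convention $X_0(\alpha)$ is a point. For $n$ even, $X_n(\alpha)$ does not depend on $\alpha$ up to isomorphism. *)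

From HB Require Import structures.
From mathcomp Require Import all_boot all_order all_algebra.
Set Implicit Arguments. Unset Strict Implicit. Unset Printing Implicit Defensive.
Import GRing.Theory Num.Theory.
Local Open Scope ring_scope.

(* Extended coordinates (1-based indexing k = 0..n+1):
   ext 0 = alpha, ext k = x_k for 1 <= k <= n, ext (n+1) = 1.
   Then the defining equations of X_n(alpha) read uniformly
   x_i x'_i = 1 + ext (i-1) * ext (i+1), for 1 <= i <= n:
   i = 1 : x_1 x'_1 = 1 + alpha x_2  (n = 1 : 1 + alpha)
   i = n : x_n x'_n = 1 + x_{n-1}. *)
Definition ext_coord (F : nzRingType) (n : nat) (alpha : F) (x : {ffun 'I_n -> F})
  (k : nat) : F :=
  if k == 0%N then alpha
  else if (k <= n)%N then (if insub k.-1 is Some i then x i else 0)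
  else 1.

Definition Xn_points (F : finFieldType) (n : nat) (alpha : F) :
  {set {ffun 'I_n -> F} * {ffun 'I_n -> F}} :=
  [set p : {ffun 'I_n -> F} * {ffun 'I_n -> F} | [forall i : 'I_n,
     p.1 i * p.2 i == 1 + ext_coord alpha p.1 i * ext_coord alpha p.1 i.+2]].

Definition N_A (F : finFieldType) (n : nat) (alpha : F) : nat :=
  #|Xn_points n alpha|.

From HB Require Import structures.
From mathcomp Require Import all_boot all_order all_algebra.
From mathcomp Require Import ring.
Set Implicit Arguments. Unset Strict Implicit.
Import GRing.Theory Num.Theory.
Local Open Scope ring_scope.

(* Project X_n(a) to the x-coordinates. Over x, the fibre is a product of the
   solution sets of x_i y = b_i(x); each has 1 element if x_i != 0, and q or 0
   elements if x_i = 0. Splitting on x_1 = t: if t != 0 the remaining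
   coordinates form a point of X_(n-1)(t); if t = 0 the first equation forces
   x_2 = -a^-1, x'_1 is free and x'_2 = -a is forced, leaving a point of
   X_(n-2)(-a^-1). Hence
     N_(n+2)(a) = sum_(t != 0) N_(n+1)(t) + q N_n(-a^-1),
   and the closed forms, which agree for n = 0 and n = 1, satisfy the same
   recurrence; the sign term arises because -a^-1 = (-1)^k iff a = (-1)^(k+1). *)

Section ExtendedCoordinates.
Variables (R : nzRingType) (n : nat) (a : R) (x : {ffun 'I_n -> R}).

Lemma ext_coordS (i : 'I_n) : ext_coord a x i.+1 = x i.
Proof. by rewrite /ext_coord /= ltn_ord /= valK. Qed.

Lemma ext_coord_gt k : (n < k)%N -> ext_coord a x k = 1.
Proof. by case: k => // k lt_nk; rewrite /ext_coord /= leqNgt lt_nk. Qed.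

End ExtendedCoordinates.

(* The tuple (t, y_1, ..., y_n): entries 1..n of [ext_coord t y] are those of [y]. *)
Definition ffun_cons (R : nzRingType) n (t : R) (y : {ffun 'I_n -> R}) :
  {ffun 'I_n.+1 -> R} := [ffun i : 'I_n.+1 => ext_coord t y i].

Lemma ffun_cons0 (R : nzRingType) n t (y : {ffun 'I_n -> R}) : ffun_cons t y ord0 = t.
Proof. by rewrite ffunE. Qed.

Lemma ext_coord_cons (R : nzRingType) n a t (y : {ffun 'I_n -> R}) k :
  ext_coord a (ffun_cons t y) k.+1 = ext_coord t y k.
Proof.
case: (leqP k n) => [le_kn | lt_nk]; last by rewrite !ext_coord_gt.
by rewrite (ext_coordS a (ffun_cons t y) (Ordinal (le_kn : k < n.+1)%N)) ffunE.
Qed.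

Lemma big_ffun_cons (R : finNzRingType) (S : Type) (idx : S)
    (op : Monoid.com_law idx) n (G : {ffun 'I_n.+1 -> R} -> S) :
  \big[op/idx]_x G x = \big[op/idx]_t \big[op/idx]_(y : {ffun 'I_n -> R}) G (ffun_cons t y).
Proof.
rewrite pair_big /= (reindex (fun p : R * {ffun 'I_n -> R} => ffun_cons p.1 p.2)) //=.
exists (fun x => (x ord0, [ffun j => x (lift ord0 j)])) => [[t y] _|x _] /=.
  by rewrite ffun_cons0; congr (_, _); apply/ffunP => j; rewrite !ffunE ext_coordS.
apply/ffunP => -[[|k] lt_kn]; rewrite ffunE; first by congr (x _); apply: val_inj.
by rewrite (ext_coordS _ _ (Ordinal (lt_kn : k < n)%N)) ffunE; congr (x _); apply: val_inj.
Qed.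

Section PointCount.
Variable F : finFieldType.

Definition nsol (a b : F) : nat := #|[set y : F | a * y == b]|.

Lemma nsolE a b : nsol a b = if a != 0 then 1%N else if b == 0 then #|F| else 0%N.
Proof.
rewrite /nsol; have [a0 | nz_a] /= := eqVneq a 0.
  have -> : [set y | a * y == b] = if b == 0 then setT else set0.
    by apply/setP => y; rewrite inE a0 mul0r eq_sym; case: (b == 0); rewrite inE.
  by case: eqP; rewrite ?cardsT ?cards0.
rewrite (_ : [set y | a * y == b] = [set b / a]) ?cards1 //; apply/setP => y.
by rewrite !inE; apply/eqP/eqP => [<- | ->]; rewrite mulrC ?mulKf ?divfK.
Qed.

Definition nfiber n (a : F) (x : {ffun 'I_n -> F}) : nat :=
  (\prod_(i < n) nsol (x i) (1 + ext_coord a x i * ext_coord a x i.+2)%R)%N.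

Definition npoints n (a : F) : nat := (\sum_(x : {ffun 'I_n -> F}) nfiber a x)%N.

Lemma N_A_npoints n a : N_A n a = npoints n a.
Proof.
transitivity (\sum_x \sum_(y | (x, y) \in Xn_points n a) 1)%N.
  by rewrite pair_big_dep /N_A -sum1_card; apply: eq_bigl => -[].
apply: eq_bigr => x _; rewrite sum1_card.
have := cardsXn (fun i => [set y | x i * y == 1 + ext_coord a x i * ext_coord a x i.+2]).
rewrite /nfiber /nsol => <-; apply: eq_card => y.
rewrite unfold_in /= -[_ (x, y)]/((x, y) \in Xn_points n a) in_setXn inE.
by apply: eq_forallb => i; rewrite inE.
Qed.

Lemma nfiber_cons n a t (y : {ffun 'I_n -> F}) :
  nfiber a (ffun_cons t y) = (nsol t (1 + a * ext_coord t y 1)%R * nfiber t y)%N.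
Proof.
rewrite /nfiber big_ord_recl ffun_cons0 ext_coord_cons; congr (_ * _)%N.
apply: eq_bigr => i _; rewrite !ext_coord_cons.
by rewrite -(ext_coordS a (ffun_cons t y) (lift ord0 i)) ext_coord_cons ext_coordS.
Qed.

Lemma npoints_succ n a : npoints n.+1 a =
  (\sum_t \sum_(y : {ffun 'I_n -> F}) nsol t (1 + a * ext_coord t y 1)%R * nfiber t y)%N.
Proof.
by rewrite /npoints big_ffun_cons; apply: eq_bigr => t _; apply: eq_bigr => y _; rewrite nfiber_cons.
Qed.

Lemma npoints0 a : npoints 0 a = 1%N.
Proof.
rewrite /npoints (eq_bigr (fun _ => 1%N)) => [|x _]; last by rewrite /nfiber big_ord0.
by rewrite sum1_card card_ffun card_ord.
Qed.

Lemma npoints1 a :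
  npoints 1 a = (#|F|.-1 + if (1 + a == 0)%R then #|F| else 0)%N.
Proof.
have inner t : (\sum_(y : {ffun 'I_0 -> F})
    nsol t (1 + a * ext_coord t y 1)%R * nfiber t y)%N = nsol t (1 + a).
  rewrite (eq_bigr (fun _ => nsol t (1 + a))) => [|y _].
    by rewrite sum_nat_const card_ffun card_ord mul1n.
  by rewrite ext_coord_gt // mulr1 /nfiber big_ord0 muln1.
rewrite npoints_succ (eq_bigr _ (fun t _ => inner t)) (bigD1 0) //= nsolE eqxx /=.
rewrite (eq_bigr (fun _ => 1%N)) => [|t nz_t]; last by rewrite nsolE nz_t.
by rewrite sum_nat_const cardC1 muln1 addnC.
Qed.

Lemma npoints_rec m a : a != 0 ->
  npoints m.+2 a = (\sum_(t | t != 0%R) npoints m.+1 t + #|F| * npoints m (- a^-1)%R)%N.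
Proof.
move=> nz_a; rewrite npoints_succ (bigD1 0) //= addnC; congr (_ + _)%N.
  by apply: eq_bigr => t nz_t; apply: eq_bigr => y _; rewrite nsolE nz_t mul1n.
have root_a u : (1 + a * u == 0) = (u == - a^-1).
  by rewrite addrC addr_eq0 -[RHS](inj_eq (mulfI nz_a)) mulrN mulfV.
rewrite big_ffun_cons (bigD1 (- a^-1)) //= [X in (_ + X)%N]big1 => [|u ne_u]; last first.
  by apply: big1 => z _; rewrite ext_coord_cons nsolE eqxx /= root_a (negbTE ne_u) mul0n.
rewrite addn0 /npoints big_distrr /=; apply: eq_bigr => z _.
rewrite ext_coord_cons nfiber_cons nsolE eqxx /= root_a eqxx.
by rewrite nsolE oppr_eq0 invr_eq0 nz_a mul1n.
Qed.

Definition q : rat := #|F|%:R.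

Definition npoints_formula n (a : F) : rat :=
  if odd n then
    (q ^+ (n.+1)./2 - 1) * (q ^+ (n.+3)./2 - 1) / (q ^+ 2 - 1)
     + (a == (-1) ^+ (n.+1)./2)%:R * q ^+ (n.+1)./2
  else (q ^+ n.+2 - 1) / (q ^+ 2 - 1).

Lemma q_gt1 : 1 < q.
Proof. by rewrite ltr1n card_finNzRing_gt1. Qed.

Lemma sqrq_sub1_neq0 : q ^+ 2 - 1 != 0.
Proof. by rewrite lt0r_neq0 // subr_gt0 exprn_egt1 // q_gt1. Qed.

Lemma sumr_nonzero_const (c : rat) : \sum_(t : F | t != 0) c = (q - 1) * c.
Proof.
rewrite sumr_const cardC1 -mulr_natl /q; congr (_ * _).
by rewrite -subn1 natrB // ltnW // card_finNzRing_gt1.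
Qed.

Lemma sumr_nonzero_indicator (c : F) (r : rat) : c != 0 ->
  \sum_(t : F | t != 0) (t == c)%:R * r = r.
Proof.
move=> nz_c; rewrite (bigD1 c) //= eqxx mul1r big1 ?addr0 // => t /andP [_ ne_tc].
by rewrite (negbTE ne_tc) mul0r.
Qed.

Lemma sign_neq0 k : ((-1) ^+ k : F) != 0.
Proof. by rewrite expf_neq0 // oppr_eq0 oner_eq0. Qed.

Lemma opp_inv_eq_sign (a : F) k :
  (- a^-1 == (-1) ^+ k) = (a == (-1) ^+ k.+1).
Proof. by rewrite eqr_oppLR (can2_eq invrK invrK) invrN invr_sign exprS mulN1r. Qed.

Lemma npoints_formula_rec m a :
  npoints_formula m.+2 a =
    \sum_(t | t != 0) npoints_formula m.+1 t + q * npoints_formula m (- a^-1).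
Proof.
have := sqrq_sub1_neq0; rewrite expr2 => d_neq0.
rewrite /npoints_formula /= -(odd_double_half m); move: (m./2) => k.
case: (odd m); rewrite /= ?negbK ?odd_double /= ?add0n ?add1n ?doubleK.
  rewrite sumr_nonzero_const opp_inv_eq_sign.
  by rewrite !exprS -addnn exprD expr0 mulr1; field.
rewrite big_split /= sumr_nonzero_const sumr_nonzero_indicator ?sign_neq0 //.
by rewrite !exprS -addnn exprD expr0 mulr1; field.
Qed.

Lemma npointsE n a : a != 0 -> (npoints n a)%:R = npoints_formula n a.
Proof.
elim/ltn_ind: n a => -[|[|m]] IH a nz_a.
- by rewrite npoints0 /npoints_formula /= divff // sqrq_sub1_neq0.
- rewrite npoints1 /npoints_formula /= addrC addr_eq0 !expr1 -mulrA.
  rewrite divff ?sqrq_sub1_neq0 // mulr1 natrD -subn1 natrB; last exact/ltnW/card_finNzRing_gt1.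
  by case: (a == -1); rewrite /= ?mul1r ?mul0r ?addr0.
rewrite npoints_rec // natrD natr_sum natrM npoints_formula_rec; congr (_ + _).
  by apply: eq_bigr => t; apply: IH.
by rewrite (IH m) // oppr_eq0 invr_eq0.
Qed.
End PointCount.

Theorem mainTheorem6 (F : finFieldType) (n : nat) (alpha : F) :
  (0 < n)%N -> alpha != 0 ->
  let q : rat := (#|F|)%:R in
  [/\ ~~ odd n ->
        (N_A n alpha)%:R = (q ^+ n.+2 - 1) / (q ^+ 2 - 1),
      odd n -> alpha != (-1) ^+ (n.+1)./2 ->
        (N_A n alpha)%:R =
          (q ^+ (n.+1)./2 - 1) * (q ^+ (n.+3)./2 - 1) / (q ^+ 2 - 1)
    & odd n -> alpha = (-1) ^+ (n.+1)./2 ->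
        (N_A n alpha)%:R =
          (q ^+ (n.+1)./2 - 1) * (q ^+ (n.+3)./2 - 1) / (q ^+ 2 - 1)
          + q ^+ (n.+1)./2].
Proof.
(* The count is also right for n = 0, where X_0 is a point. *)
move=> _ nz_alpha q0.
rewrite N_A_npoints npointsE // /npoints_formula /q.
split=> [even_n | odd_n | odd_n]; rewrite ?(negbTE even_n) ?odd_n //.
  by move=> /negbTE ->; rewrite mul0r addr0.
by move=> ->; rewrite eqxx mul1r.
Qed.
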